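(* For $\mathfrak{g}=sl(n)$ with $G=GL(n)$, the Belavin–Drinfeld cohomology $H^1_{BD}(r_{DJ})$ associated to the Drinfeld–Jimbo $r$-matrix is trivial, i.e. every cocycle $X\in GL(n,\overline{\mathbb{K}})$ with $X^{-1}\sigma(X)\in C(r_{DJ})$ for all $\sigma\in\mathrm{Gal}(\overline{\mathbb{K}}/\mathbb{K})$ is of the form $X=QC$ with $Q\in GL(n,\mathbb{K})$ and $C\in C(r_{DJ})$.
   Context: $\mathbb{K}=\mathbb{C}((\hbar))$, $\overline{\mathbb{K}}$ its algebraic closure, Galois group acting entrywise. $GL(n)$ acts on $sl(n)$ by $\mathrm{Ad}_X(a)=XaX^{-1}$. $e_{ik}$ are matrix units, $\Omega=\sum_{i,k}e_{ik}\otimes e_{ki}-\frac1n I\otimes I$, $\Omega_0=\sum_i e_{ii}\otimes e_{ii}-\frac1nI\otimes I$ its Cartan part. The Drinfeld–Jimbo $r$-matrix is $r_{DJ}=\sum_{i<k}e_{ik}\otimes e_{ki}+\frac12\Omega_0$. $C(r)=\{X\in GL(n,\overline{\mathbb{K}}):(\mathrm{Ad}_X\otimes\mathrm{Ad}_X)(r)=r\}$. A cocycle associated to $r$ is $X\in GL(n,\overline{\mathbb{K}})$ with $X^{-1}\sigma(X)\in C(r)$ for all $\sigma$; cocycles $X_1,X_2$ are equivalent if $X_1=QX_2C$ with $Q\in GL(n,\mathbb{K})$, $C\in C(r)$; $H^1_{BD}(r)$ is the set of classes, called trivial if every cocycle is equivalent to the identity. *)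

From HB Require Import structures.
From mathcomp Require Import all_boot all_order all_algebra all_field.
Set Implicit Arguments. Unset Strict Implicit. Unset Printing Implicit Defensive.
Import Order.TTheory GRing.Theory Num.Theory.
Local Open Scope ring_scope.

(* Elements of gl(n) (x) gl(n), in coordinates w.r.t. the basis
   e_ij (x) e_kl : the coefficient of e_ij (x) e_kl is T (i,j,k,l)
   (index pattern ((i, j), k), l). *)
Notation tensor R n := {ffun 'I_n * 'I_n * 'I_n * 'I_n -> R}.

Definition tens (R : nzRingType) (n : nat) (a b : 'M[R]_n) : tensor R n :=
  [ffun p => a p.1.1.1 p.1.1.2 * b p.1.2 p.2].

Definition tscale (R : nzRingType) (n : nat) (c : R) (T : tensor R n) : tensor R n :=
  [ffun p => c * T p].

Definition Ad (R : comUnitRingType) (n : nat) (X a : 'M[R]_n) : 'M[R]_n :=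
  X *m a *m invmx X.

Definition AdAd (R : comUnitRingType) (n : nat) (X : 'M[R]_n) (T : tensor R n)
  : tensor R n :=
  \sum_(p : 'I_n * 'I_n * 'I_n * 'I_n)
     tscale (T p) (tens (Ad X (delta_mx p.1.1.1 p.1.1.2)) (Ad X (delta_mx p.1.2 p.2))).

Definition Omega0 (F : fieldType) (n : nat) : tensor F n :=
  \sum_(i < n) tens (delta_mx i i) (delta_mx i i)
  - tscale (n%:R)^-1 (tens 1%:M 1%:M).

Definition rDJ (F : fieldType) (n : nat) : tensor F n :=
  \sum_(i < n) \sum_(k < n | (i < k)%N) tens (delta_mx i k) (delta_mx k i)
  + tscale 2^-1 (Omega0 F n).

Definition inC (F : fieldType) (n : nat) (r : tensor F n) (X : 'M[F]_n) : Prop :=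
  X \in unitmx /\ AdAd X r = r.

Definition inGal (L : fieldType) (K : {pred L}) (s : {rmorphism L -> L}) : Prop :=
  bijective s /\ (forall x, x \in K -> s x = x).

Definition inGLK (L : fieldType) (K : {pred L}) (n : nat) (Q : 'M[L]_n) : Prop :=
  Q \in unitmx /\ (forall i j, Q i j \in K).

Definition algebraic_over (L : fieldType) (K : {pred L}) : Prop :=
  forall x : L, exists p : {poly L}, [/\ p != 0, p \is a polyOver K & root p x].

From HB Require Import structures.
From mathcomp Require Import all_boot all_order all_algebra all_field.
From mathcomp Require Import boolp zify ring.
From mathcomp Require classical_sets.
Import GRing.Theory.
Local Open Scope ring_scope.
Set Implicit Arguments. Unset Strict Implicit. Unset Printing Implicit Defensive.

(* Let X be a cocycle.  Choose in each column j of X a nonzero entry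
   X_(p j, j), let D be the diagonal matrix of these entries and Q = X D^-1,
   so that Q_ij = X_ij / X_(p j, j) and X = Q D.  Two facts finish the proof:
   (1) C(r_DJ) is the diagonal torus: every element of C(r_DJ) is diagonal
       (in characteristic <> 2) and every invertible diagonal matrix lies in
       C(r_DJ); in particular D is in C(r_DJ).
   (2) The fixed field of Gal(L/K) is K, for L algebraically closed and
       algebraic over K of characteristic 0.
   For s in Gal(L/K), M = X^-1 s(X) is in C(r_DJ), hence diagonal by (1), so
   s(X_ij) = X_ij M_jj and s fixes every Q_ij; by (2), Q has entries in K. *)

(* For C invertible, (Ad_C (x) Ad_C)(T) = T holds iff
   T (C (x) C) = (C (x) C) T; we compare the coefficients of e_am (x) e_cq of
   both sides, namely mulT_CC C T a c m q and mulCC_T C T a c m q. *)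
Section TensorCoordinates.
Variables (R : fieldType) (n : nat).
Implicit Types (C A B : 'M[R]_n) (T : tensor R n).

Definition mulT_CC C T (a c m q : 'I_n) :=
  \sum_(b < n) \sum_(d < n) T (a, b, c, d) * C b m * C d q.
Definition mulCC_T C T (a c m q : 'I_n) :=
  \sum_(i < n) \sum_(k < n) C a i * C c k * T (i, m, k, q).

Lemma sum_delta (G : 'I_n -> R) (c : 'I_n) (P : pred 'I_n) :
  \sum_(k < n | P k) (c == k)%:R * G k = (P c)%:R * G c.
Proof.
rewrite big_mkcond (bigD1 c) //= big1 ?addr0.
  by rewrite eqxx; case: (P c); rewrite /= ?mulr1n ?mulr0n ?mul1r ?mul0r.
by move=> k /negbTE ck; rewrite eq_sym ck; case: (P k); rewrite /= ?mulr0n ?mul0r.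
Qed.

Lemma sum_delta_r (G : 'I_n -> R) (b : 'I_n) : \sum_(k < n) G k * (k == b)%:R = G b.
Proof. by rewrite (bigD1 b) //= eqxx mulr1 big1 ?addr0 // => k /negbTE ->; rewrite mulr0. Qed.

Section Linearity.
Variables (C : 'M[R]_n) (a c m q : 'I_n).

Lemma mulT_CC0 : mulT_CC C 0 a c m q = 0.
Proof. by rewrite /mulT_CC big1 // => b _; rewrite big1 // => d _; rewrite ffunE !mul0r. Qed.
Lemma mulCC_T0 : mulCC_T C 0 a c m q = 0.
Proof. by rewrite /mulCC_T big1 // => b _; rewrite big1 // => d _; rewrite ffunE !mulr0. Qed.
Lemma mulT_CCD T1 T2 :
  mulT_CC C (T1 + T2) a c m q = mulT_CC C T1 a c m q + mulT_CC C T2 a c m q.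
Proof.
rewrite /mulT_CC -big_split; apply: eq_bigr => b _; rewrite -big_split; apply: eq_bigr => d _.
by rewrite ffunE !mulrDl.
Qed.
Lemma mulCC_TD T1 T2 :
  mulCC_T C (T1 + T2) a c m q = mulCC_T C T1 a c m q + mulCC_T C T2 a c m q.
Proof.
rewrite /mulCC_T -big_split; apply: eq_bigr => b _; rewrite -big_split; apply: eq_bigr => d _.
by rewrite ffunE !mulrDr.
Qed.
Lemma mulT_CCB T1 T2 :
  mulT_CC C (T1 - T2) a c m q = mulT_CC C T1 a c m q - mulT_CC C T2 a c m q.
Proof.
rewrite /mulT_CC -sumrB; apply: eq_bigr => b _; rewrite -sumrB; apply: eq_bigr => d _.
by rewrite !ffunE; ring.
Qed.
Lemma mulCC_TB T1 T2 :
  mulCC_T C (T1 - T2) a c m q = mulCC_T C T1 a c m q - mulCC_T C T2 a c m q.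
Proof.
rewrite /mulCC_T -sumrB; apply: eq_bigr => b _; rewrite -sumrB; apply: eq_bigr => d _.
by rewrite !ffunE; ring.
Qed.
Lemma mulT_CC_sum (I : Type) (r : seq I) (P : pred I) (G : I -> tensor R n) :
  mulT_CC C (\sum_(i <- r | P i) G i) a c m q =
    \sum_(i <- r | P i) mulT_CC C (G i) a c m q.
Proof. exact: (big_morph (fun T => mulT_CC C T a c m q) mulT_CCD mulT_CC0). Qed.
Lemma mulCC_T_sum (I : Type) (r : seq I) (P : pred I) (G : I -> tensor R n) :
  mulCC_T C (\sum_(i <- r | P i) G i) a c m q =
    \sum_(i <- r | P i) mulCC_T C (G i) a c m q.
Proof. exact: (big_morph (fun T => mulCC_T C T a c m q) mulCC_TD mulCC_T0). Qed.
Lemma mulT_CC_scale x T : mulT_CC C (tscale x T) a c m q = x * mulT_CC C T a c m q.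
Proof.
rewrite /mulT_CC mulr_sumr; apply: eq_bigr => b _; rewrite mulr_sumr; apply: eq_bigr => d _.
by rewrite ffunE !mulrA.
Qed.
Lemma mulCC_T_scale x T : mulCC_T C (tscale x T) a c m q = x * mulCC_T C T a c m q.
Proof.
rewrite /mulCC_T mulr_sumr; apply: eq_bigr => b _; rewrite mulr_sumr; apply: eq_bigr => d _.
by rewrite ffunE; ring.
Qed.

Lemma mulT_CC_tens A B : mulT_CC C (tens A B) a c m q = (A *m C) a m * (B *m C) c q.
Proof.
rewrite /mulT_CC !mxE big_distrl; apply: eq_bigr => b _.
rewrite big_distrr; apply: eq_bigr => d _.
by rewrite ffunE /=; ring.
Qed.
Lemma mulCC_T_tens A B : mulCC_T C (tens A B) a c m q = (C *m A) a m * (C *m B) c q.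
Proof.
rewrite /mulCC_T !mxE big_distrl; apply: eq_bigr => b _.
rewrite big_distrr; apply: eq_bigr => d _.
by rewrite ffunE /=; ring.
Qed.
End Linearity.

Lemma tensor_expansion T : T = \sum_(p : 'I_n * 'I_n * 'I_n * 'I_n)
  tscale (T p) (tens (delta_mx p.1.1.1 p.1.1.2) (delta_mx p.1.2 p.2)).
Proof.
apply/ffunP => x; rewrite sum_ffunE (bigD1 x) //= big1 ?addr0.
  by rewrite !ffunE !mxE !eqxx /= !mulr1.
case: x => [[[a b] c] d] [[[i j] k] l] /= ne; rewrite !ffunE !mxE /=.
have [ai|_] := eqVneq a i; last by rewrite /= !(mul0r, mulr0).
have [bj|_] := eqVneq b j; last by rewrite /= !(mul0r, mulr0).
have [ck|_] := eqVneq c k; last by rewrite /= !(mul0r, mulr0).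
have [dl|_] := eqVneq d l; last by rewrite /= !(mul0r, mulr0).
by move: ne; rewrite ai bj ck dl eqxx.
Qed.

Lemma mulT_CC_AdAd C T a c m q : C \in unitmx ->
  mulT_CC C (AdAd C T) a c m q = mulCC_T C T a c m q.
Proof.
move=> C_unit; rewrite mulT_CC_sum [in RHS](tensor_expansion T) mulCC_T_sum.
apply: eq_bigr => p _.
by rewrite mulT_CC_scale mulCC_T_scale mulT_CC_tens mulCC_T_tens /Ad !mulmxKV.
Qed.

Lemma mulT_CC_inj C T1 T2 : C \in unitmx ->
  (forall a c m q, mulT_CC C T1 a c m q = mulT_CC C T2 a c m q) -> T1 = T2.
Proof.
move=> C_unit eqT.
(* T is recovered from T (C (x) C) by multiplying with C^-1 (x) C^-1 *)
suff recover T a b c d : T (a, b, c, d) =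
    \sum_(m < n) \sum_(q < n) mulT_CC C T a c m q * invmx C m b * invmx C q d.
  apply/ffunP => [[[[a b] c] d]]; rewrite recover [RHS]recover.
  by do 2 (apply: eq_bigr => ? _); rewrite eqT.
have CV x y : \sum_(m < n) C x m * invmx C m y = (x == y)%:R.
  by move: (mulmxV C_unit) => /(congr1 (fun M : 'M[R]_n => M x y)); rewrite !mxE.
transitivity (\sum_(b' < n) \sum_(d' < n) T (a, b', c, d') * (b' == b)%:R * (d' == d)%:R).
  under eq_bigr => b' _ do rewrite (sum_delta_r (fun d' => T (a, b', c, d') * (b' == b)%:R)).
  by rewrite (sum_delta_r (fun b' => T (a, b', c, d))).
transitivity (\sum_(b' < n) \sum_(d' < n) \sum_(m < n) \sum_(q < n)
   T (a, b', c, d') * C b' m * C d' q * invmx C m b * invmx C q d).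
  apply: eq_bigr => b' _; apply: eq_bigr => d' _.
  rewrite -CV -CV big_distrr /= [RHS]exchange_big /=; apply: eq_bigr => q _.
  by rewrite mulr_sumr mulr_suml; apply: eq_bigr => m _; ring.
under eq_bigr => b' _ do rewrite exchange_big /=.
rewrite exchange_big /=; apply: eq_bigr => m _.
under eq_bigr => b' _ do rewrite exchange_big /=.
rewrite exchange_big /=; apply: eq_bigr => q _.
by rewrite !mulr_suml; apply: eq_bigr => b' _; rewrite !mulr_suml.
Qed.

Lemma AdAd_fixed_iff C T : C \in unitmx ->
  AdAd C T = T <-> forall a c m q, mulT_CC C T a c m q = mulCC_T C T a c m q.
Proof.
move=> C_unit; split; first by move=> fixT a c m q; rewrite -{1}fixT mulT_CC_AdAd.
by move=> eqT; apply: (mulT_CC_inj C_unit) => a c m q; rewrite mulT_CC_AdAd.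
Qed.

End TensorCoordinates.

Section DrinfeldJimboCoordinates.
Variables (R : fieldType) (n : nat).
Implicit Types (C : 'M[R]_n).

Lemma delta_mulmx (i k a m : 'I_n) C : (delta_mx i k *m C) a m = (a == i)%:R * C k m.
Proof.
rewrite mxE (bigD1 k) //= big1 ?addr0; first by rewrite mxE eqxx andbT.
by move=> j /negbTE jk; rewrite mxE jk andbF /= mul0r.
Qed.
Lemma mulmx_delta (i k a m : 'I_n) C : (C *m delta_mx i k) a m = C a i * (m == k)%:R.
Proof.
rewrite mxE (bigD1 i) //= big1 ?addr0; first by rewrite mxE eqxx.
by move=> j /negbTE ji; rewrite mxE ji /= mulr0.
Qed.

Lemma mulT_CC_rDJ C a c m q : mulT_CC C (rDJ R n) a c m q =
  (a < c)%N%:R * C c m * C a q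
  + 2^-1 * ((c == a)%:R * C a m * C a q - n%:R^-1 * (C a m * C c q)).
Proof.
rewrite /rDJ /Omega0 mulT_CCD mulT_CC_scale mulT_CCB mulT_CC_scale mulT_CC_tens !mul1mx.
congr (_ + _ * (_ - _)); rewrite mulT_CC_sum.
  transitivity (\sum_(i < n) (a == i)%:R * ((i < c)%N%:R * C c m * C i q)).
    apply: eq_bigr => i _; rewrite mulT_CC_sum.
    transitivity (\sum_(k < n | (i < k)%N) (c == k)%:R * ((a == i)%:R * C k m * C i q)).
      by apply: eq_bigr => k _; rewrite mulT_CC_tens !delta_mulmx; ring.
    by rewrite sum_delta; ring.
  by rewrite (sum_delta (fun i => (i < c)%N%:R * C c m * C i q) a predT) /=; ring.
transitivity (\sum_(i < n) (a == i)%:R * ((c == i)%:R * C i m * C i q)).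
  by apply: eq_bigr => i _; rewrite mulT_CC_tens !delta_mulmx; ring.
by rewrite (sum_delta (fun i => (c == i)%:R * C i m * C i q) a predT) /=; ring.
Qed.

Lemma mulCC_T_rDJ C a c m q : mulCC_T C (rDJ R n) a c m q =
  (q < m)%N%:R * C a q * C c m
  + 2^-1 * (C a m * C c m * (q == m)%:R - n%:R^-1 * (C a m * C c q)).
Proof.
rewrite /rDJ /Omega0 mulCC_TD mulCC_T_scale mulCC_TB mulCC_T_scale mulCC_T_tens !mulmx1.
congr (_ + _ * (_ - _)); rewrite mulCC_T_sum.
  transitivity (\sum_(i < n) (q == i)%:R * ((i < m)%N%:R * C a i * C c m)).
    apply: eq_bigr => i _; rewrite mulCC_T_sum.
    transitivity (\sum_(k < n | (i < k)%N) (m == k)%:R * (C a i * C c k * (q == i)%:R)).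
      by apply: eq_bigr => k _; rewrite mulCC_T_tens !mulmx_delta; ring.
    by rewrite (sum_delta (fun k => C a i * C c k * (q == i)%:R)); ring.
  by rewrite (sum_delta (fun i => (i < m)%N%:R * C a i * C c m) q predT) /=; ring.
transitivity (\sum_(i < n) (m == i)%:R * (C a i * C c i * (q == i)%:R)).
  by apply: eq_bigr => i _; rewrite mulCC_T_tens !mulmx_delta; ring.
by rewrite (sum_delta (fun i => C a i * C c i * (q == i)%:R) m predT) /=; ring.
Qed.

End DrinfeldJimboCoordinates.

Lemma ord_incr_id (n : nat) (f : 'I_n -> 'I_n) :
  (forall i j : 'I_n, (i < j)%N -> (f i < f j)%N) -> forall i, f i = i.
Proof.
case: n f => [|n] f f_incr i; first by case: i.
pose g k := val (f (inord k)).
have g_incr k k' : (k < k')%N -> (k' < n.+1)%N -> (g k < g k')%N.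
  by move=> lt_kk' lt_k'; apply: f_incr; rewrite !inordK //; lia.
have g_lt k : (g k < n.+1)%N by apply: ltn_ord.
(* g k >= k by induction upwards, g k <= k by induction downwards *)
have ge_g k : (k < n.+1)%N -> (k <= g k)%N.
  elim: k => [|k IH] lt_k //; have := IH (ltnW lt_k); have := g_incr k k.+1; lia.
have le_g j k : (k + j = n)%N -> (g k <= k)%N.
  elim: j k => [|j IH] k eq_n; first by have := g_lt k; lia.
  have := IH k.+1; have := g_incr k k.+1; lia.
apply: val_inj => /=; have gi : g i = f i by rewrite /g inord_val.
have := ge_g i; have := le_g (n - i)%N i; have := ltn_ord i; lia.
Qed.

Definition pivot (R : fieldType) (n : nat) (C : 'M[R]_n) (j : 'I_n) : 'I_n :=
  odflt j [pick i | C i j != 0].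

Lemma pivotP (R : fieldType) (n : nat) (C : 'M[R]_n) j :
  C \in unitmx -> C (pivot C j) j != 0.
Proof.
move=> C_unit; rewrite /pivot; case: pickP => //= col0.
have : (invmx C *m C) j j = 0.
  by rewrite mxE big1 // => i _; move: (col0 i) => /negbFE/eqP ->; rewrite mulr0.
by rewrite mulVmx // mxE eqxx /= => /eqP; rewrite oner_eq0.
Qed.

Section DrinfeldJimboCentralizer.
Variables (R : fieldType) (n : nat).
Hypothesis two_neq0 : 2%:R != 0 :> R.
Implicit Types (C : 'M[R]_n).

Lemma natr_eq_half (b : bool) (x : R) : b%:R * x = 2^-1 * x -> x = 0.
Proof.
case: b => /=; rewrite ?mul1r ?mul0r => eq_x.
  have : x * 2%:R = x by rewrite {1}eq_x mulrAC mulVf // mul1r.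
  by rewrite mulr_natr mulr2n -{3}[x]addr0 => /addrI.
by move/eqP: eq_x; rewrite eq_sym mulf_eq0 invr_eq0 (negbTE two_neq0) => /eqP.
Qed.

(* The coordinate identities characterising C(r_DJ); the Casimir terms
   n^-1 (C_am C_cq) cancel on both sides. *)
Lemma centralizer_rDJ_coord C : inC (rDJ R n) C -> forall a c m q : 'I_n,
  (a < c)%N%:R * C c m * C a q + 2^-1 * ((c == a)%:R * C a m * C a q) =
  (q < m)%N%:R * C a q * C c m + 2^-1 * (C a m * C c m * (q == m)%:R).
Proof.
move=> [C_unit fixC] a c m q; apply/eqP; rewrite -subr_eq0; apply/eqP.
transitivity (mulT_CC C (rDJ R n) a c m q - mulCC_T C (rDJ R n) a c m q).
  by rewrite mulT_CC_rDJ mulCC_T_rDJ; ring.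
by rewrite ((AdAd_fixed_iff _ C_unit).1 fixC) subrr.
Qed.

Section CentralizerElement.
Variable C : 'M[R]_n.
Hypothesis C_centr : inC (rDJ R n) C.
Implicit Types a c m q : 'I_n.

Lemma centralizer_col a c m : a != c -> C a m * C c m = 0.
Proof.
move=> ac; have := centralizer_rDJ_coord C_centr a c m m.
rewrite ltnn eq_sym (negbTE ac) eqxx /= !mul0r mulr0 !addr0 add0r mulr1 => eq_am.
by apply: (@natr_eq_half (a < c)%N); rewrite -eq_am; ring.
Qed.

Lemma centralizer_row a m q : q != m -> C a m * C a q = 0.
Proof.
move=> qm; have := centralizer_rDJ_coord C_centr a a m q.
rewrite ltnn eqxx (negbTE qm) /= => eq_aq.
apply: (@natr_eq_half (q < m)%N); symmetry.
transitivity (0 * C a m * C a q + 2^-1 * (1 * C a m * C a q)); first ring.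
by rewrite eq_aq; ring.
Qed.

Lemma centralizer_cross a c m q : (c < a)%N -> (q < m)%N -> C a q * C c m = 0.
Proof.
move=> ca qm; have := centralizer_rDJ_coord C_centr a c m q.
have -> : (a < c)%N = false by apply/negbTE; rewrite -leqNgt ltnW.
have -> : (c == a) = false by apply/negbTE; rewrite neq_ltn ca.
have -> : (q == m) = false by apply/negbTE; rewrite neq_ltn qm.
by rewrite qm /= !mul0r !mulr0 !addr0 mul1r => <-.
Qed.

(* Hence the pivot map is strictly increasing, so it is the identity and C is
   diagonal. *)
Lemma centralizer_rDJ_diagonal a q : a != q -> C a q = 0.
Proof.
have [C_unit _] := C_centr.
have piv_unique a' q' : C a' q' != 0 -> a' = pivot C q'.
  move=> nz; apply/eqP; apply/negP => /negP ne; move/eqP: (centralizer_col q' ne).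
  by rewrite mulf_eq0 (negbTE nz) (negbTE (pivotP q' C_unit)).
have piv_incr q' m : (q' < m)%N -> (pivot C q' < pivot C m)%N.
  move=> qm; have nz_q := pivotP q' C_unit; have nz_m := pivotP m C_unit.
  rewrite ltn_neqAle; apply/andP; split.
    have mq : q' != m by rewrite neq_ltn qm.
    apply/negP => /eqP /val_inj eq_piv; move: (centralizer_row (pivot C q') mq).
    by rewrite {1}eq_piv => /eqP; rewrite mulf_eq0 (negbTE nz_m) (negbTE nz_q).
  rewrite leqNgt; apply/negP => lt_piv; move: (centralizer_cross lt_piv qm) => /eqP.
  by rewrite mulf_eq0 (negbTE nz_m) (negbTE nz_q).
move=> aq; apply: contraNeq aq => nz.
by rewrite (piv_unique a q nz) (ord_incr_id piv_incr).
Qed.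
End CentralizerElement.

Lemma diag_in_centralizer (d : 'rV[R]_n) : (forall i, d 0 i != 0) -> inC (rDJ R n) (diag_mx d).
Proof.
move=> d_neq0; set D := diag_mx d.
have D_unit : D \in unitmx.
  by rewrite unitmxE det_diag unitfE; apply/prodf_neq0 => i _.
split => //; apply/(AdAd_fixed_iff _ D_unit) => a c m q.
rewrite mulT_CC_rDJ mulCC_T_rDJ.
have D0 x y : x != y -> D x y = 0 by move=> xy; rewrite mxE (negbTE xy) mulr0n.
have -> : (a < c)%N%:R * D c m * D a q = (q < m)%N%:R * D a q * D c m.
  have [<-|cm] := eqVneq c m; last by rewrite (D0 c m) // !(mulr0, mul0r).
  have [<-|aq] := eqVneq a q; last by rewrite (D0 a q) // !(mulr0, mul0r).
  by rewrite mulrAC.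
have -> // : (c == a)%:R * D a m * D a q = D a m * D c m * (q == m)%:R.
have [<-|am] := eqVneq a m; last by rewrite (D0 a m) // !(mulr0, mul0r).
have [<-|aq] := eqVneq a q; last by rewrite (D0 a q) // /= !(mulr0, mul0r).
have [->|ca] := eqVneq c a; first by rewrite /=; ring.
by rewrite (D0 c a) // !(mulr0, mul0r).
Qed.
End DrinfeldJimboCentralizer.
(* Subrings of L given by Prop-valued predicates.  The intermediate rings of
   the Zorn argument below are defined by existential formulas, so they are
   Prop-valued rather than boolean. *)
Section Subrings.
Variable L : fieldType.
Implicit Types (F : L -> Prop) (p q g m : {poly L}).

Definition is_subring F := [/\ F 1, forall x y, F x -> F y -> F (x - y) &
  forall x y, F x -> F y -> F (x * y)].

Definition is_subfield F := is_subring F /\ forall x, F x -> F x^-1.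

Definition poly_over F p := forall i, F p`_i.

Definition minpoly_over F a mp := [/\ mp \is monic, poly_over F mp, root mp a &
  forall g, poly_over F g -> root g a -> exists2 h, poly_over F h & g = h * mp].

Section SubringTheory.
Variables (F : L -> Prop) (F_subring : is_subring F).

Lemma subring1 : F 1. Proof. by case: F_subring. Qed.
Lemma subringB x y : F x -> F y -> F (x - y).
Proof. by case: F_subring => _ h _; apply: h. Qed.
Lemma subringM x y : F x -> F y -> F (x * y).
Proof. by case: F_subring => _ _ h; apply: h. Qed.
Lemma subring0 : F 0. Proof. by rewrite -(subrr 1); apply: subringB; apply: subring1. Qed.
Lemma subringN x : F x -> F (- x).
Proof. by move=> Fx; rewrite -sub0r; apply: subringB => //; apply: subring0. Qed.
Lemma subringD x y : F x -> F y -> F (x + y).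
Proof. by move=> Fx Fy; rewrite -(opprK y); apply: subringB => //; apply: subringN. Qed.
Lemma subring_sum (I : Type) (r : seq I) (P : pred I) (G : I -> L) :
  (forall i, P i -> F (G i)) -> F (\sum_(i <- r | P i) G i).
Proof. by move=> FG; apply: (big_ind F) => //; [apply: subring0 | apply: subringD]. Qed.
Lemma subringMn x k : F x -> F (x *+ k).
Proof.
move=> Fx; elim: k => [|k IH]; first by rewrite mulr0n; apply: subring0.
by rewrite mulrS; apply: subringD.
Qed.
Lemma subringX x k : F x -> F (x ^+ k).
Proof.
move=> Fx; elim: k => [|k IH]; first by rewrite expr0; apply: subring1.
by rewrite exprS; apply: subringM.
Qed.

Lemma poly_over0 : poly_over F 0. Proof. by move=> i; rewrite coef0; apply: subring0. Qed.
Lemma poly_overC c : F c -> poly_over F c%:P.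
Proof. by move=> Fc i; rewrite coefC; case: eqP => _ //; apply: subring0. Qed.
Lemma poly_overX : poly_over F 'X.
Proof. by move=> i; rewrite coefX; case: eqP => _; [apply: subring1 | apply: subring0]. Qed.
Lemma poly_overXn k : poly_over F 'X^k.
Proof. by move=> i; rewrite coefXn; case: eqP => _; [apply: subring1 | apply: subring0]. Qed.
Lemma poly_overD p q : poly_over F p -> poly_over F q -> poly_over F (p + q).
Proof. by move=> Fp Fq i; rewrite coefD; apply: subringD. Qed.
Lemma poly_overB p q : poly_over F p -> poly_over F q -> poly_over F (p - q).
Proof. by move=> Fp Fq i; rewrite coefB; apply: subringB. Qed.
Lemma poly_overM p q : poly_over F p -> poly_over F q -> poly_over F (p * q).
Proof. by move=> Fp Fq i; rewrite coefM; apply: subring_sum => j _; apply: subringM. Qed.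
Lemma poly_overZ c p : F c -> poly_over F p -> poly_over F (c *: p).
Proof. by move=> Fc Fp i; rewrite coefZ; apply: subringM. Qed.
Lemma poly_over_deriv p : poly_over F p -> poly_over F p^`().
Proof. by move=> Fp i; rewrite coef_deriv; apply: subringMn. Qed.
Lemma poly_over_horner p x : poly_over F p -> F x -> F p.[x].
Proof.
move=> Fp Fx; rewrite horner_coef; apply: subring_sum => i _.
by apply: subringM => //; apply: subringX.
Qed.

Lemma poly_over_divp m g : m \is monic -> poly_over F m -> poly_over F g ->
  exists h r, [/\ poly_over F h, poly_over F r, g = h * m + r & (size r < size m)%N].
Proof.
move=> m_monic Fm; have m_neq0 : m != 0 by apply: monic_neq0.
elim: {g}(size g).+1 {-2}g (ltnSn (size g)) => // N IH g g_size Fg.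
have [lt_g_m|le_m_g] := ltnP (size g) (size m).
  by exists 0, g; split => //; [apply: poly_over0 | rewrite mul0r add0r].
have g_neq0 : g != 0 by rewrite -size_poly_gt0 (leq_trans _ le_m_g) ?size_poly_gt0.
(* subtract t * m, which has the same leading term as g *)
pose t := lead_coef g *: 'X^(size g - size m).
have t_neq0 : t != 0.
  by rewrite scaler_eq0 lead_coef_eq0 (negbTE g_neq0) /= monic_neq0 ?monicXn.
have size_tm : size (t * m) = size g.
  rewrite size_Mmonic // size_scale ?lead_coef_eq0 // size_polyXn.
  have : (0 < size m)%N by rewrite size_poly_gt0.
  lia.
have lead_tm : lead_coef (t * m) = lead_coef g.
  by rewrite lead_coef_Mmonic // lead_coefZ lead_coefXn mulr1.
have drop_size : (size (g - t * m)%R < size g)%N.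
  have g_size_pos : (0 < size g)%N by rewrite size_poly_gt0.
  rewrite -(prednK g_size_pos) ltnS; apply/leq_sizeP => j le_j; rewrite coefB.
  move: le_j; rewrite leq_eqVlt => /orP[/eqP <-|lt_j].
    by move: lead_tm; rewrite /lead_coef size_tm => ->; rewrite subrr.
  by rewrite !nth_default ?subrr ?size_tm // -(prednK g_size_pos).
have Ft : poly_over F t by apply: poly_overZ; [apply: Fg | apply: poly_overXn].
have [h [r [Fh Fr eq_g size_r]]] :=
  IH _ (leq_trans drop_size g_size) (poly_overB Fg (poly_overM Ft Fm)).
exists (h + t), r; split => //; first exact: poly_overD.
by rewrite mulrDl -addrA [t * m + r]addrC addrA -eq_g subrK.
Qed.

End SubringTheory.

Lemma minpoly_over_exists F a : is_subfield F ->
  (exists p, [/\ p != 0, poly_over F p & root p a]) -> exists mp, minpoly_over F a mp.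
Proof.
move=> [F_subring F_inv] ex_p.
pose P N := `[< exists p, [/\ p != 0, poly_over F p, root p a & size p = N] >].
have exP : exists N, P N.
  by case: ex_p => p [p_neq0 Fp root_p]; exists (size p); apply/asboolP; exists p.
case: (ex_minnP exP) => N /asboolP [p [p_neq0 Fp root_p size_p]] minN.
have lc_neq0 : lead_coef p != 0 by rewrite lead_coef_eq0.
pose mp := (lead_coef p)^-1 *: p.
have root_mp : root mp a by rewrite /root hornerZ (eqP root_p) mulr0.
have mp_monic : mp \is monic by apply/monicP; rewrite lead_coefZ mulVf.
have Fmp : poly_over F mp by apply: poly_overZ => //; apply: F_inv; apply: Fp.
exists mp; split => // g Fg root_g.
have [h [r [Fh Fr eq_g size_r]]] := poly_over_divp F_subring mp_monic Fmp Fg.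
exists h => //; have [r0|r_neq0] := eqVneq r 0; first by rewrite eq_g r0 addr0.
(* a nonzero remainder would be a smaller polynomial vanishing at a *)
have root_r : root r a.
  by move: root_g; rewrite /root eq_g hornerD hornerM (eqP root_mp) mulr0 add0r.
have : (N <= size r)%N by apply: minN; apply/asboolP; exists r.
by rewrite -size_p -(size_scale p (invr_neq0 lc_neq0)) leqNgt size_r.
Qed.

Definition partial_rmorph F (f : L -> L) :=
  [/\ f 1 = 1, forall x y, F x -> F y -> f (x - y) = f x - f y &
      forall x y, F x -> F y -> f (x * y) = f x * f y].

Definition pextends F (f : L -> L) F' (f' : L -> L) :=
  forall x, F x -> F' x /\ f' x = f x.

Section PartialMorphismTheory.
Variables (F : L -> Prop) (F_subring : is_subring F).
Variables (f : L -> L) (f_morph : partial_rmorph F f).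

Lemma pmorph1 : f 1 = 1. Proof. by case: f_morph. Qed.
Lemma pmorphB x y : F x -> F y -> f (x - y) = f x - f y.
Proof. by case: f_morph => _ h _; apply: h. Qed.
Lemma pmorphM x y : F x -> F y -> f (x * y) = f x * f y.
Proof. by case: f_morph => _ _ h; apply: h. Qed.
Lemma pmorph0 : f 0 = 0.
Proof. by rewrite -(subrr 1) pmorphB ?subrr //; apply: subring1. Qed.
Lemma pmorphD x y : F x -> F y -> f (x + y) = f x + f y.
Proof.
move=> Fx Fy; have F0 := subring0 F_subring.
have fN : f (- y) = - f y by rewrite -sub0r pmorphB ?pmorph0 ?sub0r.
by rewrite -(opprK y) pmorphB ?fN ?opprK //; apply: subringN.
Qed.
Lemma pmorph_sum (I : Type) (r : seq I) (P : pred I) (G : I -> L) :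
  (forall i, P i -> F (G i)) -> f (\sum_(i <- r | P i) G i) = \sum_(i <- r | P i) f (G i).
Proof.
move=> FG; elim: r => [|i r IH]; first by rewrite !big_nil pmorph0.
rewrite !big_cons; case: (boolP (P i)) => Pi //.
by rewrite pmorphD ?IH //; [apply: FG | apply: subring_sum].
Qed.
Lemma pmorphX x k : F x -> f (x ^+ k) = f x ^+ k.
Proof.
move=> Fx; elim: k => [|k IH]; first by rewrite !expr0 pmorph1.
by rewrite !exprS pmorphM ?IH //; apply: subringX.
Qed.

Lemma coef_map_pmorph p i : (map_poly f p)`_i = f p`_i.
Proof. by rewrite coef_map_id0 // pmorph0. Qed.
Lemma map_pmorphB p q : poly_over F p -> poly_over F q ->
  map_poly f (p - q) = map_poly f p - map_poly f q.
Proof. by move=> Fp Fq; apply/polyP => i; rewrite coefB !coef_map_pmorph coefB pmorphB. Qed.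
Lemma map_pmorphM p q : poly_over F p -> poly_over F q ->
  map_poly f (p * q) = map_poly f p * map_poly f q.
Proof.
move=> Fp Fq; apply/polyP => i; rewrite !coefM coef_map_pmorph coefM pmorph_sum.
  by apply: eq_bigr => j _; rewrite pmorphM // !coef_map_pmorph.
by move=> j _; apply: subringM.
Qed.
Lemma map_pmorphC c : map_poly f c%:P = (f c)%:P.
Proof.
by apply/polyP => i; rewrite coef_map_pmorph !coefC; case: eqP => // _; rewrite pmorph0.
Qed.
Lemma map_pmorphX : map_poly f 'X = 'X.
Proof.
by apply/polyP => i; rewrite coef_map_pmorph !coefX; case: eqP => _; rewrite ?pmorph1 ?pmorph0.
Qed.
Lemma horner_map_pmorph p x : poly_over F p -> F x -> (map_poly f p).[f x] = f p.[x].
Proof.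
move=> Fp Fx; rewrite (horner_coef_wide _ (size_poly _ _)) horner_coef pmorph_sum.
  by apply: eq_bigr => i _; rewrite coef_map_pmorph pmorphM ?pmorphX //; apply: subringX.
by move=> i _; apply: subringM => //; apply: subringX.
Qed.
Lemma size_map_pmorph_monic p : p \is monic -> size (map_poly f p) = size p.
Proof. by move=> /monicP p_monic; apply: size_map_poly_id0; rewrite p_monic pmorph1 oner_neq0. Qed.

End PartialMorphismTheory.

Lemma pmorph_adjoin F f a b : is_subring F -> partial_rmorph F f ->
  (forall g, poly_over F g -> root g a -> root (map_poly f g) b) ->
  exists F' f', [/\ is_subring F', partial_rmorph F' f', pextends F f F' f',
     F' a & f' a = b].
Proof.
move=> F_subring f_morph root_b.
pose F' x := exists2 g, poly_over F g & x = g.[a].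
pose f' x := if pselect (F' x) is left Fx
  then (map_poly f (s2val (cid2 Fx))).[b] else x.
have f'E g : poly_over F g -> f' g.[a] = (map_poly f g).[b].
  move=> Fg; rewrite /f'; case: pselect => [Fx|[]]; last by exists g.
  case: (cid2 Fx) => g' /= Fg' eq_g; apply/eqP; rewrite -subr_eq0 -hornerN -hornerD.
  rewrite -(map_pmorphB F_subring f_morph) //; apply: root_b; first exact: poly_overB.
  by rewrite /root hornerD hornerN eq_g subrr.
have ext : pextends F f F' f'.
  move=> x Fx; have -> : x = (x%:P).[a] by rewrite hornerC.
  split; first by exists x%:P => //; apply: poly_overC.
  by rewrite f'E ?(map_pmorphC F_subring f_morph) ?hornerC //; apply: poly_overC.
have F1 := subring1 F_subring.
exists F', f'; split => //.
- split; first exact: (ext _ F1).1.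
  + move=> _ _ [g Fg ->] [g' Fg' ->]; exists (g - g'); first exact: poly_overB.
    by rewrite hornerD hornerN.
  + move=> _ _ [g Fg ->] [g' Fg' ->]; exists (g * g'); first exact: poly_overM.
    by rewrite hornerM.
- split; first by rewrite (ext _ F1).2 (pmorph1 f_morph).
  + move=> _ _ [g Fg ->] [g' Fg' ->].
    rewrite -hornerN -hornerD (f'E (g - g')) ?(map_pmorphB F_subring f_morph) //.
      by rewrite hornerD hornerN !f'E.
    exact: poly_overB.
  + move=> _ _ [g Fg ->] [g' Fg' ->].
    rewrite -hornerM (f'E (g * g')) ?(map_pmorphM F_subring f_morph) //.
      by rewrite hornerM !f'E.
    exact: poly_overM.
- by exists 'X; [apply: poly_overX | rewrite hornerX].
- by rewrite -[a]hornerX f'E ?(map_pmorphX F_subring f_morph) ?hornerX //; apply: poly_overX.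
Qed.
End Subrings.

Section AlgebraicExtension.
Variables (L : closedFieldType) (K : {pred L}).
Hypotheses (K_field : GRing.divring_closed K) (L_alg : algebraic_over K).

Let inK (x : L) : Prop := x \in K.

Lemma inK_subfield : is_subfield inK.
Proof.
case: K_field => K1 KB KD.
have K_inv x : inK x -> inK x^-1 by move=> Kx; rewrite /inK -div1r; apply: KD.
split => //; split => // x y Kx Ky.
by rewrite -[y]invrK; apply: KD => //; apply: K_inv.
Qed.

Let inK_subring : is_subring inK := inK_subfield.1.

Lemma algebraic_over_superring F a : (forall x, inK x -> F x) ->
  exists p, [/\ p != 0, poly_over F p & root p a].
Proof.
move=> KF; have [p [p_neq0 /allP Kp root_p]] := L_alg a; exists p; split => // i.
apply: KF; have [lt_i|le_i] := ltnP i (size p); first by apply/Kp/mem_nth.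
by rewrite nth_default //; apply: (subring0 inK_subring).
Qed.

Lemma minpoly_K_exists a : exists mp, minpoly_over inK a mp.
Proof. by apply: minpoly_over_exists; [apply: inK_subfield | apply: algebraic_over_superring]. Qed.

(* x^-1 is a polynomial in x with coefficients in K: divide the minimal
   polynomial of x by its (nonzero) constant term. *)
Lemma inv_poly_K x : exists2 h, poly_over inK h & x^-1 = h.[x].
Proof.
have [->|x_neq0] := eqVneq x 0.
  by exists 0; [apply: (poly_over0 inK_subring) | rewrite invr0 horner0].
have [mp [mp_monic Kmp root_mp mp_min]] := minpoly_K_exists x.
set c := mp`_0; set q := drop_poly 1 mp.
have mpE : mp = c%:P + q * 'X.
  rewrite -{1}(poly_take_drop 1 mp) expr1; congr (_ + _).
  by apply/polyP => i; rewrite coef_take_poly coefC; case: i.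
have Kq : poly_over inK q by move=> i; rewrite coef_drop_poly; apply: Kmp.
have q_root : c + q.[x] * x = 0.
  by move: root_mp; rewrite /root {1}mpE hornerD hornerM hornerC hornerX => /eqP.
have c_neq0 : c != 0.
  (* otherwise q, of smaller size, would vanish at x *)
  apply/negP => /eqP c0; move: q_root; rewrite c0 add0r => /eqP.
  rewrite mulf_eq0 (negbTE x_neq0) orbF => root_q.
  have [h _ qE] := mp_min q Kq root_q.
  have mp_neq0 : mp != 0 by apply: monic_neq0.
  have q_neq0 : q != 0.
    by apply: contra mp_neq0 => /eqP q0; rewrite mpE q0 c0 mul0r addr0.
  have : (size mp <= size q)%N by rewrite dvdp_leq // qE dvdp_mulIr.
  rewrite size_drop_poly subn1 leqNgt ltn_predL size_poly_gt0.
  by rewrite mp_neq0.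
exists ((- c)^-1 *: q).
  apply: (poly_overZ inK_subring) => //; apply: inK_subfield.2.
  by apply: (subringN inK_subring); apply: Kmp.
rewrite hornerZ; have -> : q.[x] = - c * x^-1.
  apply: (mulIf x_neq0); rewrite -mulrA mulVf // mulr1.
  by apply/eqP; rewrite -addr_eq0 addrC q_root.
by rewrite mulrA mulVf ?mul1r // oppr_eq0.
Qed.

Lemma superring_K_subfield F : is_subring F -> (forall x, inK x -> F x) -> is_subfield F.
Proof.
move=> F_subring KF; split => // x Fx; have [h Kh ->] := inv_poly_K x.
by apply: poly_over_horner => // i; apply: KF.
Qed.

Definition Kembedding F (f : L -> L) :=
  [/\ is_subring F, (forall x, inK x -> F x), (forall x, inK x -> f x = x) &
      partial_rmorph F f].

(* A K-embedding extends to any further element a of L: send a to a root of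
   the image of its minimal polynomial, which exists as L is algebraically closed. *)
Lemma Kembedding_adjoin F f a : Kembedding F f ->
  exists F' f', [/\ Kembedding F' f', pextends F f F' f' & F' a].
Proof.
move=> [F_subring KF fK f_morph].
have F_subfield := superring_K_subfield F_subring KF.
have [mp [mp_monic Fmp root_mp mp_min]] :=
  minpoly_over_exists F_subfield (algebraic_over_superring a KF).
have fmp_size : size (map_poly f mp) != 1%N.
  rewrite (size_map_pmorph_monic f_morph mp_monic); apply/negP => /size_poly1P [c c0 mpE].
  by move: root_mp; rewrite mpE /root hornerC (negbTE c0).
have [b root_b] := closed_rootP _ fmp_size.
have root_image g : poly_over F g -> root g a -> root (map_poly f g) b.
  move=> Fg root_g; have [h Fh ->] := mp_min g Fg root_g.
  by rewrite (map_pmorphM F_subring f_morph) // /root hornerM (eqP root_b) mulr0.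
have [F' [f' [F'_subring f'_morph ext F'a _]]] :=
  pmorph_adjoin F_subring f_morph root_image.
exists F', f'; split => //; split => // x Kx; first exact: (ext x (KF x Kx)).1.
by rewrite (ext x (KF x Kx)).2 fK.
Qed.

Section ZornExtension.
Variables (y0 z0 : L).
Hypothesis z0_conj : forall g, poly_over inK g -> root g y0 -> root g z0.

Definition sends_y0_z0 (ef : (L -> Prop) * (L -> L)) :=
  [/\ Kembedding ef.1 ef.2, ef.1 y0 & ef.2 y0 = z0].
Definition Ext := {ef | sends_y0_z0 ef}.
Definition dom (e : Ext) : L -> Prop := (sval e).1.
Definition emb (e : Ext) : L -> L := (sval e).2.
Definition ext_le : rel Ext := fun e e' => `[< pextends (dom e) (emb e) (dom e') (emb e') >].

Lemma ExtP (e : Ext) : [/\ Kembedding (dom e) (emb e), dom e y0 & emb e y0 = z0].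
Proof. exact: (svalP e). Qed.

Lemma Ext_inhabited : inhabited Ext.
Proof.
have id_morph : partial_rmorph inK id by [].
have root_image g : poly_over inK g -> root g y0 -> root (map_poly id g) z0.
  by move=> Kg root_g; rewrite map_poly_id //; apply: z0_conj.
have [F' [f' [F'_subring f'_morph ext F'y0 f'y0]]] :=
  pmorph_adjoin inK_subring id_morph root_image.
have F'_ok : sends_y0_z0 (F', f').
  by split => //; split => // x Kx; [exact: (ext x Kx).1 | exact: (ext x Kx).2].
by constructor; exists (F', f').
Qed.

Lemma chain_union (A : Ext -> Prop) (e0 : Ext) : A e0 ->
  classical_sets.total_on A ext_le -> exists e, forall e', A e' -> ext_le e' e.
Proof.
move=> Ae0 A_chain.
have le_common x y : (exists2 e, A e & dom e x) -> (exists2 e, A e & dom e y) ->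
    exists e, [/\ A e, dom e x & dom e y].
  move=> [e Ae ex] [e' Ae' ey]; case: (A_chain e e' Ae Ae') => /asboolP le.
    by exists e'; split => //; exact: (le x ex).1.
  by exists e; split => //; exact: (le y ey).1.
pose U x := exists2 e, A e & dom e x.
pose fU x := if pselect (U x) is left Ux then emb (s2val (cid2 Ux)) x else x.
have fUE e x : A e -> dom e x -> fU x = emb e x.
  move=> Ae ex; rewrite /fU; case: pselect => [Ux|[]]; last by exists e.
  case: (cid2 Ux) => e' /= Ae' e'x.
  by case: (A_chain e e' Ae Ae') => /asboolP le; rewrite (le x _).2.
have [[F0_subring KF0 fK0 f0_morph] F0y0 f0y0] := ExtP e0.
have U_subring : is_subring U.
  split; first by exists e0 => //; apply: subring1.
  + move=> x y Ux Uy; have [e [Ae ex ey]] := le_common x y Ux Uy.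
    have [[Fe _ _ _] _ _] := ExtP e; exists e => //; exact: subringB.
  + move=> x y Ux Uy; have [e [Ae ex ey]] := le_common x y Ux Uy.
    have [[Fe _ _ _] _ _] := ExtP e; exists e => //; exact: subringM.
have fU_morph : partial_rmorph U fU.
  split; first by rewrite (fUE e0) ?(pmorph1 f0_morph) //; apply: subring1.
  + move=> x y Ux Uy; have [e [Ae ex ey]] := le_common x y Ux Uy.
    have [[Fe _ _ fe] _ _] := ExtP e.
    by rewrite !(fUE e) ?(pmorphB fe) //; apply: subringB.
  + move=> x y Ux Uy; have [e [Ae ex ey]] := le_common x y Ux Uy.
    have [[Fe _ _ fe] _ _] := ExtP e.
    by rewrite !(fUE e) ?(pmorphM fe) //; apply: subringM.
have U_ok : sends_y0_z0 (U, fU).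
  split => //=; last by rewrite (fUE e0).
  - split => // x Kx; first by exists e0 => //; apply: KF0.
    by rewrite (fUE e0) ?fK0 //; apply: KF0.
  - by exists e0.
by exists (exist _ _ U_ok) => e Ae; apply/asboolP => x ex; split; [exists e | apply: fUE].
Qed.

(* By Zorn's lemma a maximal extension exists; by maximality and
   Kembedding_adjoin it is defined on all of L. *)
Lemma Kendo_sending_y0_z0 : exists f : L -> L,
  [/\ partial_rmorph (fun _ => True) f, (forall x, x \in K -> f x = x) & f y0 = z0].
Proof.
have [e0] := Ext_inhabited.
have [| | |e e_max] := @classical_sets.ZL_preorder Ext e0 ext_le.
- by move=> e; apply/asboolP.
- move=> e1 e2 e3 /asboolP le12 /asboolP le23; apply/asboolP => x e1x.
  have [e2x <-] := le12 x e1x; exact: le23.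
- move=> A A_chain; have [[e' Ae']|A0] := pselect (exists e', A e').
    exact: chain_union Ae' A_chain.
  by exists e0 => e' Ae'; case: A0; exists e'.
have [emb_e ey0 fy0] := ExtP e.
have dom_full x : dom e x.
  have [F' [f' [F'_emb ext F'x]]] := Kembedding_adjoin x emb_e.
  have F'_ok : sends_y0_z0 (F', f').
    by split => //=; [exact: (ext _ ey0).1 | rewrite (ext _ ey0).2].
  have le : ext_le e (exist _ _ F'_ok) by apply/asboolP.
  by have /asboolP le' := e_max _ le; exact: (le' x F'x).1.
have [_ _ fK f_morph] := emb_e.
exists (emb e); split => //; split; first exact: (pmorph1 f_morph).
- by move=> x y _ _; apply: (pmorphB f_morph).
- by move=> x y _ _; apply: (pmorphM f_morph).
Qed.
End ZornExtension.

(* A K-endomorphism of L is bijective: it is injective (L is a field) and it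
   permutes the finitely many roots of the minimal polynomial of any w. *)
Lemma Kendo_bijective f : partial_rmorph (fun _ => True) f ->
  (forall x, x \in K -> f x = x) -> bijective f.
Proof.
move=> f_morph fK; have L_subring : is_subring (fun _ : L => True) by [].
have f_inj : injective f.
  move=> x y fxy; apply/eqP; rewrite -subr_eq0; apply/negPn/negP => xy_neq0.
  have : f ((x - y) * (x - y)^-1) = 0.
    by rewrite (pmorphM f_morph) // (pmorphB f_morph) // fxy subrr mul0r.
  by rewrite mulfV // (pmorph1 f_morph); apply/eqP; rewrite oner_eq0.
have f_surj w : exists r, w = f r.
  have [mp [mp_monic Kmp root_mp _]] := minpoly_K_exists w.
  have [rs] := closed_field_poly_normal mp; rewrite (monicP mp_monic) scale1r => mpE.
  have rootE u : root mp u = (u \in rs) by rewrite mpE root_prod_XsubC.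
  have f_mp : map_poly f mp = mp.
    by apply/polyP => i; rewrite (coef_map_pmorph L_subring f_morph) fK //; apply: Kmp.
  have f_roots r : r \in rs -> f r \in rs.
    rewrite -!rootE /root -{2}f_mp (horner_map_pmorph L_subring f_morph) // => /eqP ->.
    by rewrite (pmorph0 L_subring f_morph).
  have f_undup : uniq (map f (undup rs)) by rewrite map_inj_uniq // undup_uniq.
  have sub : {subset map f (undup rs) <= undup rs}.
    by move=> v /mapP [r]; rewrite !mem_undup => /f_roots fr ->.
  have [_ eq_rs] := uniq_min_size f_undup sub (eq_leq (esym (size_map f _))).
  have : w \in map f (undup rs) by rewrite eq_rs mem_undup -rootE.
  by case/mapP => r _ ->; exists r.
exists (fun w => sval (cid (f_surj w))) => x; last exact: esym (svalP (cid (f_surj x))).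
by apply: f_inj; rewrite -(svalP (cid (f_surj (f x)))).
Qed.

Lemma deriv_neq0_char0 (R : idomainType) (p : {poly R}) :
  [pchar R] =i pred0 -> (1 < size p)%N -> p^`() != 0.
Proof.
move=> char0 size_p; apply/eqP => /polyP /(_ (size p).-2).
rewrite coef_deriv coef0.
have -> : (size p).-2.+1 = (size p).-1 by case: (size p) size_p => [|[|k]].
rewrite -mulr_natr -/(lead_coef p) => /eqP; rewrite mulf_eq0 lead_coef_eq0.
by rewrite (pcharf0P _).1 // -size_poly_eq0; case: (size p) size_p => [|[|k]].
Qed.

Section Characteristic0.
Hypothesis L_char0 : [pchar L] =i pred0.

Lemma minpoly_simple_root y mp h : minpoly_over inK y mp ->
  mp = h * ('X - y%:P) -> ~~ root h y.
Proof.
move=> [mp_monic Kmp root_mp mp_min] mpE; apply/negP => root_h.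
have root_d : root mp^`() y.
  by rewrite /root mpE derivM derivXsubC mulr1 hornerD hornerM hornerXsubC subrr mulr0 add0r.
have [g _ dE] := mp_min _ (poly_over_deriv inK_subring Kmp) root_d.
have mp_neq0 : mp != 0 by apply: monic_neq0.
have size_mp : (1 < size mp)%N.
  have h_neq0 : h != 0 by apply: contra mp_neq0 => /eqP h0; rewrite mpE h0 mul0r.
  rewrite mpE size_mul ?polyXsubC_eq0 // size_XsubC addn2 /= ltnS size_poly_gt0 //.
(* mp divides its nonzero derivative, which is of smaller size *)
have : (size mp <= size mp^`())%N.
  by rewrite dvdp_leq ?(deriv_neq0_char0 L_char0) // dE dvdp_mulIr.
by rewrite leqNgt lt_size_deriv.
Qed.

Lemma conjugate_exists y : y \notin K -> exists z, z != y /\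
  forall g, poly_over inK g -> root g y -> root g z.
Proof.
move=> yNK; have [mp mp_min] := minpoly_K_exists y.
have [mp_monic Kmp root_mp mp_div] := mp_min.
have [h mpE] := sig_eqW (factor_theorem _ _ root_mp).
have size_h : size h != 1%N.
  (* otherwise mp = 'X - y, so that y = - mp`_0 lies in K *)
  apply/negP => /size_poly1P [c c_neq0 hC].
  have c1 : c = 1.
    by move: (monicP mp_monic); rewrite mpE hC lead_coef_Mmonic ?monicXsubC // lead_coefC.
  move: (Kmp 0%N); rewrite mpE hC c1 mul1r coefB coefX coefC /= sub0r => Ky.
  by apply: (negP yNK); rewrite -[y]opprK; apply: (subringN inK_subring).
have [z root_z] := closed_rootP _ size_h.
have simple := minpoly_simple_root mp_min mpE.
exists z; split; first by apply: contraNneq simple => <-.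
move=> g Kg root_g; have [q _ ->] := mp_div g Kg root_g.
by rewrite /root hornerM mpE hornerM (eqP root_z) mul0r mulr0.
Qed.

Lemma galois_fixed_field y :
  (forall s : {rmorphism L -> L}, inGal K s -> s y = y) -> y \in K.
Proof.
move=> y_fixed; apply/negPn/negP => yNK.
have [z [z_neq_y z_conj]] := conjugate_exists yNK.
have [f [f_morph fK fy]] := Kendo_sending_y0_z0 z_conj.
have f_zmod : zmod_morphism f by move=> a b; apply: (pmorphB f_morph).
have f_monoid : monoid_morphism f.
  by split; [apply: (pmorph1 f_morph) | move=> a b; apply: (pmorphM f_morph)].
pose s : {rmorphism L -> L} := HB.pack f
  (GRing.isZmodMorphism.Build L L f f_zmod) (GRing.isMonoidMorphism.Build L L f f_monoid).
have := y_fixed s (conj (Kendo_bijective f_morph fK) fK).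
by rewrite /= fy => zy; rewrite zy eqxx in z_neq_y.
Qed.
End Characteristic0.
End AlgebraicExtension.

(* If s(X) = X M with M invertible and diagonal, s scales each column of X by
   a nonzero factor, hence fixes the ratios of entries in a same column. *)
Lemma column_ratio_fixed (R : fieldType) (n : nat) (s : {rmorphism R -> R})
    (X M : 'M[R]_n) :
  map_mx s X = X *m M -> M \in unitmx -> (forall a b, a != b -> M a b = 0) ->
  forall i j k, X k j != 0 -> s (X i j / X k j) = X i j / X k j.
Proof.
move=> sXE M_unit M_diag i j k Xkj_neq0.
have sX a b : s (X a b) = X a b * M b b.
  have := congr1 (fun Y : 'M[R]_n => Y a b) sXE; rewrite !mxE => ->.
  by rewrite (bigD1 b) //= big1 ?addr0 // => c cb; rewrite M_diag ?mulr0.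
have Mjj_neq0 : M j j != 0.
  by have := pivotP j M_unit; have [->|/M_diag ->] := eqVneq (pivot M j) j; rewrite ?eqxx.
by rewrite fmorph_div !sX; field; rewrite Xkj_neq0 Mjj_neq0.
Qed.

Theorem mainTheorem6 (L : closedFieldType) (K : {pred L}) (n : nat)
  (K_field : GRing.divring_closed K)
  (L_char0 : [pchar L] =i pred0)
  (L_alg : algebraic_over K)
  (X : 'M[L]_n)
  (X_GL : X \in unitmx)
  (X_cocycle : forall s : {rmorphism L -> L}, inGal K s ->
       inC (rDJ L n) (invmx X *m map_mx s X)) :
  exists Q C : 'M[L]_n, [/\ inGLK K Q, inC (rDJ L n) C & X = Q *m C].
Proof.
have two_neq0 : 2%:R != 0 :> L by rewrite (pcharf0P _).1.
pose d := \row_j X (pivot X j) j.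
pose Q := \matrix_(i, j) (X i j / X (pivot X j) j).
have d_neq0 j : d 0 j != 0 by rewrite mxE pivotP.
have XE : X = Q *m diag_mx d.
  by apply/matrixP => i j; rewrite mul_mx_diag !mxE divfK ?pivotP.
exists Q, (diag_mx d); split => //; first split.
- by move: X_GL; rewrite XE unitmx_mul => /andP[].
- move=> i j; rewrite mxE; apply: galois_fixed_field => // s s_gal.
  have [M_unit M_fix] := X_cocycle s s_gal.
  apply: (column_ratio_fixed _ M_unit); last exact: pivotP.
    by rewrite mulKVmx.
  exact: centralizer_rDJ_diagonal (conj M_unit M_fix).
- exact: diag_in_centralizer.
Qed.
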